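(* Let $1\le t\le n$, write $n=at+b$ with $a\ge1$ and $0\le b<t$, and let $\mathfrak p=(x_{i_1},\ldots,x_{i_a})$ with $1\le i_1<\cdots<i_a\le n$. Then $\mathfrak p\in\mathrm{Ass}(S/I_t(L_n))$ if and only if (1) $(j-1)t+b+1\le i_j\le jt$ for all $1\le j\le a$, and (2) $i_{j+1}-i_j\le t$ for all $1\le j\le a-1$.
   Context: $K$ is a field, $S=K[x_1,\ldots,x_n]$, $I_t(L_n)=(u_1,\ldots,u_{n-t+1})$ with $u_i=x_ix_{i+1}\cdots x_{i+t-1}$. *)

From HB Require Import structures.
From mathcomp Require Import all_boot all_algebra.
From mathcomp Require Import mpoly.
Unset Printing Implicit Defensive.
Import GRing.Theory.
Local Open Scope ring_scope.

(* S = K[x_1,...,x_n] is {mpoly K[n]}; the variable x_k (1 <= k <= n, 1-based)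
   is 'X_(k-1); out-of-range indices give 0 (never used in the statement). *)
Definition var (K : fieldType) (n k : nat) : {mpoly K[n]} :=
  match @insub _ (fun m => m < n)%N 'I_n k.-1 with
  | Some i => 'X_i
  | None => 0
  end.

Definition ideal_gen (K : fieldType) (n : nat) (gs : seq {mpoly K[n]})
    (f : {mpoly K[n]}) : Prop :=
  exists cs : seq {mpoly K[n]},
    size cs = size gs /\ f = \sum_(j < size gs) cs`_j * gs`_j.

Definition u_gen (K : fieldType) (n t i : nat) : {mpoly K[n]} :=
  \prod_(i <= k < i + t) var K n k.

Definition ItLn (K : fieldType) (n t : nat) : {mpoly K[n]} -> Prop :=
  @ideal_gen K n [seq u_gen K n t i | i <- iota 1 (n - t + 1)].

Definition Ass (K : fieldType) (n : nat) (I P : {mpoly K[n]} -> Prop) : Prop :=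
  exists f : {mpoly K[n]}, forall g : {mpoly K[n]}, I (g * f) <-> P g.

From HB Require Import structures.
From mathcomp Require Import all_boot all_algebra.
From mathcomp Require Import mpoly.
From mathcomp Require Import zify ring.

(* I_t(L_n) is generated by the monomials u_k = x_k ... x_(k+t-1) of the windows
   [k, k+t) in {1..n}.  Let P = (x_m : m in l).  Killing the variables of l is a
   ring endomorphism with kernel P, so P contains I exactly when every window meets
   l.  If moreover each m in l has a private window, meeting l only in m, then for
   F the product of the variables outside l the colon ideal (I : F) is P: killing
   variables fixes F and kills I, while x_m F is a multiple of the generator of the
   private window of m.  For l = {i_1 < ... < i_a}, "every window meets l" already
   forces the spacing conditions, and these in turn give the private windows. *)

Set Implicit Arguments.
Unset Strict Implicit.

Section Spacing.
Variables (n t a b : nat) (i : nat -> nat).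
Hypotheses (t_gt0 : 0 < t) (n_def : n = a * t + b) (a_gt0 : 0 < a) (b_lt_t : b < t)
  (i1_gt0 : 0 < i 1) (ia_le_n : i a <= n)
  (i_incr : forall j, 1 <= j < a -> i j < i j.+1).

Lemma i_mono p q : 1 <= p -> p <= q -> q <= a -> i p <= i q.
Proof.
move=> p_gt0; elim: q => [|q IHq] le_pq le_qa; first lia.
case: (ltngtP p q.+1) => [lt_pq|lt_qp|->]; [|lia|lia].
by have := @i_incr q; have := IHq (ltnSE lt_pq); lia.
Qed.

Lemma i_range j : 1 <= j <= a -> 1 <= i j <= n.
Proof.
case/andP=> j_gt0 le_ja.
by have := @i_mono 1 j; have := @i_mono j a; lia.
Qed.

Lemma i_le_gaps p q : (forall j, 1 <= j <= a - 1 -> i j.+1 - i j <= t) ->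
  1 <= p -> p <= q -> q <= a -> i q <= i p + (q - p) * t.
Proof.
move=> gaps p_gt0; elim: q => [|q IHq] le_pq le_qa; first lia.
case: (ltngtP p q.+1) => [lt_pq|lt_qp|->]; [|lia|lia].
have le_pq' := ltnSE lt_pq; rewrite subSn // mulSn.
by have := gaps q; have := IHq le_pq'; lia.
Qed.

Definition hits_windows := forall k, 1 <= k <= n - t + 1 ->
  exists2 j, 1 <= j <= a & k <= i j < k + t.

Definition spacing :=
  (forall j, 1 <= j <= a -> (j - 1) * t + b + 1 <= i j <= j * t) /\
  (forall j, 1 <= j <= a - 1 -> i j.+1 - i j <= t).

Lemma hits_windows_gaps : hits_windows ->
  forall j, 1 <= j <= a - 1 -> i j.+1 - i j <= t.
Proof.
move=> hits j j_range; case: (leqP (i j.+1 - i j) t) => // gap_gt_t.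
have := @i_range j.+1; have := @i_incr j; move=> ij_lt ij1_range.
have /hits[j' j'_range window] : 1 <= (i j).+1 <= n - t + 1 by lia.
case: (leqP j' j) => le_j'j; first by have := @i_mono j' j; lia.
by have := @i_mono j.+1 j'; lia.
Qed.

(* The first and the last window give i 1 <= t and n - t + 1 <= i a; the gap
   bound carries these to every i j. *)
Lemma hits_windows_spacing : hits_windows -> spacing.
Proof.
move=> hits; have gaps := hits_windows_gaps hits; split=> // j j_range.
have /hits[j1 j1_range first_window] : 1 <= 1 <= n - t + 1 by lia.
have /hits[ja ja_range last_window] : 1 <= n - t + 1 <= n - t + 1 by lia.
have := @i_mono 1 j1; have := @i_mono ja a.
have := @i_le_gaps 1 j gaps; have := @i_le_gaps j a gaps.
nia.
Qed.

Lemma spacing_hits_windows : spacing -> hits_windows.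
Proof.
move=> [bounds gaps] k k_range.
have hit_a : exists j, (1 <= j <= a) && (k <= i j).
  by exists a; have := bounds a; nia.
case: (ex_minnP hit_a) => j /andP[j_range le_k_ij] j_min; exists j => //.
rewrite le_k_ij /=; case: (ltnP 1 j) => j_gt1; last first.
  have -> : j = 1 by lia.
  by have := bounds 1; lia.
have : ~~ ((1 <= j.-1 <= a) && (k <= i j.-1)).
  by apply/negP => /j_min; lia.
by have := gaps j.-1; rewrite prednK; lia.
Qed.

Lemma spacing_private_window : spacing -> forall j, 1 <= j <= a -> exists k,
  [/\ 1 <= k, k + t <= n + 1, k <= i j < k + t &
      forall j', 1 <= j' <= a -> k <= i j' < k + t -> j' = j].
Proof.
move=> [bounds gaps] j j_range.
(* The window starts just after i (j - 1) (at 1 if j = 1), and no earlier than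
   i j - t + 1. *)
have [lo [lo_gt0 lo_le_ij lo_bound below_lo]] : exists lo, [/\ 0 < lo, lo <= i j,
    lo + t <= j * t + 1 & forall j', 1 <= j' < j -> i j' < lo].
  case: (ltnP 1 j) => j_gt1; last first.
    have j1 : j = 1 by lia.
    by exists 1; rewrite j1; split=> [||| j']; lia.
  exists (i j.-1 + 1); split=> [||| j' j'_range].
  - lia.
  - by have := @i_incr j.-1; rewrite prednK; lia.
  - by have := bounds j.-1; rewrite -subn1 mulnBl; lia.
  - by have := @i_mono j' j.-1; lia.
have above : forall j', j < j' <= a -> j * t + b + 1 <= i j' /\ i j < i j'.
  move=> j' j'_range; have := bounds j.+1; have := @i_mono j.+1 j'; have := @i_incr j.
  by rewrite subn1; lia.
exists (maxn lo (i j + 1 - t)); split.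
- lia.
- by have := @i_range j; nia.
- lia.
- move=> j' j'_range window; case: (ltngtP j' j) => [lt_j'j|lt_jj'|//].
    by have := below_lo j'; lia.
  by have := above j'; lia.
Qed.

End Spacing.

Import GRing.Theory.
Local Open Scope ring_scope.

Section IdealGen.
Variables (K : fieldType) (n : nat) (gs : seq {mpoly K[n]}).
Implicit Types (f g : {mpoly K[n]}).

Lemma ideal_gen0 : ideal_gen K n gs 0.
Proof.
exists (nseq (size gs) 0); rewrite size_nseq; split=> //.
by rewrite big1 // => j _; rewrite nth_nseq if_same mul0r.
Qed.

Lemma ideal_genD f g : ideal_gen K n gs f -> ideal_gen K n gs g -> ideal_gen K n gs (f + g).
Proof.
move=> [cf [size_cf ->]] [cg [size_cg ->]].
exists [seq cf`_j + cg`_j | j <- iota 0 (size gs)].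
rewrite size_map size_iota -big_split; split=> //; apply: eq_bigr => j _.
by rewrite (nth_map 0%N) ?size_iota // nth_iota // mulrDl.
Qed.

Lemma ideal_genMl f g : ideal_gen K n gs g -> ideal_gen K n gs (f * g).
Proof.
move=> [c [size_c ->]]; exists [seq f * c`_j | j <- iota 0 (size gs)].
rewrite size_map size_iota mulr_sumr; split=> //; apply: eq_bigr => j _.
by rewrite (nth_map 0%N) ?size_iota // nth_iota // mulrA.
Qed.

Lemma ideal_gen_mem g : g \in gs -> ideal_gen K n gs g.
Proof.
move=> g_gs; have g_idx : (index g gs < size gs)%N by rewrite index_mem.
exists [seq (j == index g gs)%:R | j <- iota 0 (size gs)].
rewrite size_map size_iota (bigD1 (Ordinal g_idx)) //= big1 ?addr0.
  by rewrite (nth_map 0%N) ?size_iota // nth_iota // eqxx mul1r nth_index.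
move=> j /eqP j_neq; rewrite (nth_map 0%N) ?size_iota // nth_iota //.
by case: eqP => [j_idx|_]; [case: j_neq; apply: val_inj | rewrite mul0r].
Qed.

Lemma ideal_gen_sum (I : Type) (r : seq I) (F : I -> {mpoly K[n]}) :
  (forall x, ideal_gen K n gs (F x)) -> ideal_gen K n gs (\sum_(x <- r) F x).
Proof.
move=> F_gs; elim: r => [|x r IHr]; first by rewrite big_nil; apply: ideal_gen0.
by rewrite big_cons; apply: ideal_genD.
Qed.

Lemma ideal_gen_rmorph_eq0 (phi : {rmorphism {mpoly K[n]} -> {mpoly K[n]}}) g :
  (forall h, h \in gs -> phi h = 0) -> ideal_gen K n gs g -> phi g = 0.
Proof.
move=> phi_gs [c [_ ->]]; rewrite rmorph_sum big1 // => j _.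
by rewrite rmorphM (phi_gs gs`_j) ?mulr0 // mem_nth.
Qed.

End IdealGen.

Section KillVars.
Variables (K : fieldType) (n : nat) (l : seq nat).

Lemma var_ord (k : 'I_n) : var K n k.+1 = 'X_k.
Proof. by rewrite /var insubT //= => k_lt_n; congr mpolyX; apply/val_inj. Qed.

Lemma var_out m : (n < m)%N -> var K n m = 0.
Proof. by move=> n_lt_m; rewrite /var insubF //; apply/negbTE; lia. Qed.

Lemma var_neq0 m : (1 <= m <= n)%N -> var K n m != 0.
Proof.
move=> m_range; have m_ord : (m.-1 < n)%N by lia.
have -> : m = (Ordinal m_ord).+1 by rewrite /=; lia.
rewrite var_ord; apply/eqP => /(congr1 (mcoeff U_(Ordinal m_ord))).
by rewrite mcoeffX eqxx mcoeff0 => /eqP; rewrite oner_eq0.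
Qed.

(* x_m |-> 0 for m in l; recall that x_m is 'X_(m-1). *)
Definition kill_vars : {rmorphism {mpoly K[n]} -> {mpoly K[n]}} :=
  mmap (mpolyC n (R := K)) (fun k : 'I_n => if k.+1 \in l then 0 else 'X_k).

Lemma kill_vars_var m : (1 <= m)%N ->
  kill_vars (var K n m) = if m \in l then 0 else var K n m.
Proof.
move=> m_gt0; case: (leqP m n) => [m_le_n|n_lt_m]; last first.
  by rewrite var_out // rmorph0 if_same.
have m_ord : (m.-1 < n)%N by lia.
have -> : m = (Ordinal m_ord).+1 by rewrite /=; lia.
by rewrite var_ord /kill_vars /= mmapX mmap1U.
Qed.

Lemma ideal_gen_sub_kill_vars_monomial (m : 'X_{1..n}) :
  ideal_gen K n [seq var K n x | x <- l] ('X_[m] - kill_vars 'X_[m]).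
Proof.
rewrite /kill_vars /= mmapX /mmap1.
case: (pickP (fun k : 'I_n => (0 < m k)%N && (k.+1 \in l))) => [k /andP[m_k k_l]|no_k].
  rewrite (bigD1 k) //= k_l expr0n gtn_eqF // mul0r subr0.
  have le_Um : (U_(k) <= m)%MM.
    by apply/mnm_lepP => k'; rewrite mnm1E; case: eqP => // <-.
  rewrite -(submK le_Um) mpolyXD; apply/ideal_genMl/ideal_gen_mem.
  by rewrite -var_ord map_f.
rewrite (eq_bigr (fun k => 'X_k ^+ m k)) ?mpolyXE_id ?subrr; first exact: ideal_gen0.
by move=> k _; have := no_k k; case: (m k) => [|e] /= => [|->]; rewrite ?expr0.
Qed.

Lemma ideal_gen_sub_kill_vars g :
  ideal_gen K n [seq var K n x | x <- l] (g - kill_vars g).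
Proof.
rewrite {1 2}(mpolyE g) (raddf_sum kill_vars) -sumrB; apply: ideal_gen_sum => m.
rewrite /kill_vars /= mmapZ -mul_mpolyC -mulrBr; apply: ideal_genMl.
by have := ideal_gen_sub_kill_vars_monomial m; rewrite /kill_vars /= mmapX.
Qed.

Lemma ideal_gen_varsE : (forall x, x \in l -> (1 <= x)%N) -> forall g,
  ideal_gen K n [seq var K n x | x <- l] g <-> kill_vars g = 0.
Proof.
move=> l_gt0 g; split; last first.
  by move=> kill_g0; have := ideal_gen_sub_kill_vars g; rewrite kill_g0 subr0.
apply: ideal_gen_rmorph_eq0 => _ /mapP[x x_l ->].
by rewrite kill_vars_var ?l_gt0 ?x_l.
Qed.

End KillVars.

Section Windows.
Variables (K : fieldType) (n t : nat) (l : seq nat).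

Local Notation window k := (fun x => k <= x < k + t)%N.

Lemma kill_vars_u_gen_eq0 k : (1 <= k)%N -> has (window k) l ->
  kill_vars K n l (u_gen K n t k) = 0.
Proof.
move=> k_gt0 /hasP[x x_l x_win]; rewrite /u_gen rmorph_prod.
by rewrite (big_rem x) ?mem_index_iota //= kill_vars_var ?x_l ?mul0r //; lia.
Qed.

Lemma kill_vars_u_gen_neq0 k : (1 <= k)%N -> (k + t <= n + 1)%N -> ~~ has (window k) l ->
  kill_vars K n l (u_gen K n t k) != 0.
Proof.
move=> k_gt0 k_le /hasPn no_hit; rewrite /u_gen rmorph_prod prodf_seq_neq0.
apply/allP => m; rewrite mem_index_iota => m_win /=.
rewrite kill_vars_var; last lia.
by case: ifP => [/no_hit|_]; [rewrite m_win | apply: var_neq0; lia].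
Qed.

Definition vars_outside := \prod_(1 <= m < n.+1 | m \notin l) var K n m.

Lemma kill_vars_outside : kill_vars K n l vars_outside = vars_outside.
Proof.
rewrite rmorph_prod big_seq_cond [RHS]big_seq_cond; apply: eq_bigr => m /andP[].
rewrite mem_index_iota => m_range /negbTE m_nl.
by rewrite kill_vars_var ?m_nl //; lia.
Qed.

Lemma vars_outside_neq0 : vars_outside != 0.
Proof.
rewrite prodf_seq_neq0; apply/allP => m; rewrite mem_index_iota => m_range.
by apply/implyP => _; apply: var_neq0; lia.
Qed.

Lemma var_mul_vars_outside x k : x \in l -> (1 <= k)%N -> (k + t <= n + 1)%N ->
  window k x -> (forall y, y \in l -> window k y -> y = x) ->
  exists r, var K n x * vars_outside = r * u_gen K n t k.
Proof.
move=> x_l k_gt0 k_le x_win only_x.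
rewrite /vars_outside (@big_cat_nat _ _ _ k) //; last lia.
rewrite (@big_cat_nat _ _ _ (k + t) k) ?leq_addr //; last lia.
set A := \prod_(1 <= _ < k | _) _; set B := \prod_(k <= _ < k + t | _) _.
set C := \prod_(k + t <= _ < n.+1 | _) _.
exists (A * C); suff -> : u_gen K n t k = var K n x * B by rewrite /=; ring.
rewrite /u_gen (bigID (mem l)) /=; congr (_ * _).
rewrite (big_rem x) ?mem_index_iota // x_l big1_seq ?Monoid.mulm1 //.
move=> m /andP[m_l]; rewrite mem_rem_uniq ?iota_uniq // inE mem_index_iota.
by case/andP=> /eqP m_neq m_win; case: m_neq; apply: only_x.
Qed.

Lemma u_gen_ItLn k : (1 <= k <= n - t + 1)%N -> ItLn K n t (u_gen K n t k).
Proof. by move=> k_range; apply/ideal_gen_mem/map_f; rewrite mem_iota; lia. Qed.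

Lemma Ass_vars_hits_windows : (t <= n)%N -> (forall x, x \in l -> (1 <= x)%N) ->
  Ass K n (ItLn K n t) (ideal_gen K n [seq var K n x | x <- l]) ->
  forall k, (1 <= k <= n - t + 1)%N -> has (window k) l.
Proof.
move=> t_le_n l_gt0 [f ann_f] k k_range; apply: contraT => no_hit.
have /(ideal_gen_varsE l_gt0) kill_u0 :
    ideal_gen K n [seq var K n x | x <- l] (u_gen K n t k).
  by apply/ann_f; rewrite mulrC; apply/ideal_genMl/u_gen_ItLn.
have k_gt0 : (1 <= k)%N by lia.
have k_le : (k + t <= n + 1)%N by lia.
by have := kill_vars_u_gen_neq0 k_gt0 k_le no_hit; rewrite kill_u0 eqxx.
Qed.

Lemma private_windows_Ass_vars :
  (forall k, (1 <= k <= n - t + 1)%N -> has (window k) l) ->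
  (forall x, x \in l -> exists k, [/\ (1 <= k)%N, (k + t <= n + 1)%N, window k x &
     forall y, y \in l -> window k y -> y = x]) ->
  Ass K n (ItLn K n t) (ideal_gen K n [seq var K n x | x <- l]).
Proof.
move=> hits private; exists vars_outside => g; split=> [ideal_gF | [c [_ ->]]].
  have l_gt0 x : x \in l -> (1 <= x)%N by case/private=> k [? _ ? _]; lia.
  apply/(ideal_gen_varsE l_gt0).
  have : kill_vars K n l (g * vars_outside) = 0.
    apply: ideal_gen_rmorph_eq0 ideal_gF => u /mapP[k]; rewrite mem_iota => k_range ->.
    by apply: kill_vars_u_gen_eq0; [lia | apply: hits; lia].
  rewrite rmorphM kill_vars_outside => /eqP.
  by rewrite mulf_eq0 (negbTE vars_outside_neq0) orbF => /eqP.
rewrite mulr_suml; apply: ideal_gen_sum => j; rewrite -mulrA; apply: ideal_genMl.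
have j_lt : (j < size l)%N by case: j => /= j; rewrite size_map.
rewrite (nth_map 0%N) //; have x_l := mem_nth 0%N j_lt.
have [k [k_gt0 k_le x_win only_x]] := private _ x_l.
have [r ->] := var_mul_vars_outside x_l k_gt0 k_le x_win only_x.
by apply/ideal_genMl/u_gen_ItLn; lia.
Qed.

End Windows.

Theorem lemma3p3 (K : fieldType) (n t a b : nat) (i : nat -> nat) :
  (1 <= t <= n)%N -> n = (a * t + b)%N -> (1 <= a)%N -> (b < t)%N ->
  (1 <= i 1)%N -> (i a <= n)%N ->
  (forall j, (1 <= j < a)%N -> (i j < i j.+1)%N) ->
  @Ass K n (ItLn K n t) (@ideal_gen K n [seq var K n (i j) | j <- iota 1 a])
  <->
  ((forall j, (1 <= j <= a)%N -> ((j - 1) * t + b + 1 <= i j <= j * t)%N) /\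
   (forall j, (1 <= j <= a - 1)%N -> (i j.+1 - i j <= t)%N)).
Proof.
move=> /andP[t_gt0 t_le_n] n_def a_gt0 b_lt_t i1_gt0 ia_le_n i_incr.
have hits_spacing := hits_windows_spacing t_gt0 n_def a_gt0 b_lt_t i1_gt0 ia_le_n i_incr.
have spacing_hits := spacing_hits_windows t_gt0 n_def a_gt0 b_lt_t i1_gt0 ia_le_n.
have private := spacing_private_window t_gt0 n_def a_gt0 b_lt_t i1_gt0 ia_le_n i_incr.
set l := [seq i j | j <- iota 1 a].
have -> : [seq var K n (i j) | j <- iota 1 a] = [seq var K n x | x <- l].
  by rewrite -map_comp.
have mem_l x : x \in l <-> exists2 j, (1 <= j <= a)%N & x = i j.
  split=> [/mapP[j] | [j j_range ->]]; rewrite ?mem_iota.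
    by move=> j_range ->; exists j => //; lia.
  by apply: map_f; rewrite mem_iota; lia.
split=> [Ass_l | sp].
  have l_gt0 x : x \in l -> (1 <= x)%N.
    case/mem_l=> j j_range ->.
    by have := i_range t_gt0 n_def a_gt0 b_lt_t i1_gt0 ia_le_n i_incr j_range; lia.
  apply: hits_spacing => k k_range.
  have := Ass_vars_hits_windows t_le_n l_gt0 Ass_l k_range.
  by case/hasP=> x /mem_l[j j_range ->] window; exists j.
apply: private_windows_Ass_vars.
  move=> k /(spacing_hits sp)[j j_range window].
  by apply/hasP; exists (i j) => //; apply/mem_l; exists j.
move=> x /mem_l[j j_range ->].
have [k [k_gt0 k_le window only_j]] := private sp j j_range.
exists k; split=> // y /mem_l[j' j'_range ->] window'.
by rewrite (only_j j' j'_range window').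
Qed.
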